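(* In the setting below, define real numbers $\epsilon_t$ by $\epsilon_t=1$ for $t\le 0$ and, for $t\ge 1$, $$\epsilon_t=\kappa^t+\alpha\mu\sum_{j=0}^{t-1}\kappa^j\sum_{i=1}^{n-1}\epsilon_{t-1-j-i}.$$ Then for all $t\ge 1$, $\mathcal{E}(t)\le\epsilon_t\,\mathcal{E}(0)$.
   Context: Let $\mathcal{A}*\mathcal{X}=\mathcal{B}$ be a consistent tensor system with unique solution $\mathcal{X}^*$, $\mathcal{A}\in\mathbb{R}^{n_1\times n_2\times n}$, $\mathcal{B}\in\mathbb{R}^{n_1\times n_3\times n}$, $\alpha>0$. Frontal slices $A_k=\mathcal{A}(:,:,k)$; $\mathrm{unfold}$ stacks them vertically, $\mathrm{fold}$ is its inverse, $\mathrm{bcirc}(\mathcal{A})$ is the block-circulant matrix with $(p,q)$ block $A_{((p-q)\bmod n)+1}$, and $\mathcal{A}*\mathcal{X}=\mathrm{fold}(\mathrm{bcirc}(\mathcal{A})\mathrm{unfold}(\mathcal{X}))$. $\mathcal{I}$ is the identity tensor (first frontal slice the identity, others zero); $\mathcal{A}^T$ transposes each frontal slice and reverses the order of slices $2,\dots,n$; $\|\cdot\|_F$ is the Frobenius norm and $\|\mathcal{C}\|_{op}=\|\mathrm{bcirc}(\mathcal{C})\|_2$. $\tilde{\mathcal{A}}_k$ has $k$-th frontal slice $A_k$ and zeros elsewhere. $\kappa=\max_i\|\mathcal{I}-\alpha\tilde{\mathcal{A}}_i^T*\tilde{\mathcal{A}}_i\|_{op}$, $\mu=\max_{i\neq j}\|\tilde{\mathcal{A}}_i^T*\tilde{\mathcal{A}}_j\|_{op}$.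 Cyclic frontal slice descent: $\mathcal{X}(t)=0$ for $t\le 0$; $\mathcal{R}(t+1)=\mathcal{B}-\sum_{j=0}^{n-1}\tilde{\mathcal{A}}_{((t-j)\bmod n)+1}*\mathcal{X}(t-j)$, $\mathcal{X}(t+1)=\mathcal{X}(t)+\alpha\tilde{\mathcal{A}}_{(t\bmod n)+1}^T*\mathcal{R}(t+1)$ for $t\ge 0$. $\mathcal{E}(t)=\|\mathcal{X}(t)-\mathcal{X}^*\|_F$, so $\mathcal{E}(t)=\|\mathcal{X}^*\|_F$ for $t\le 0$. *)

From HB Require Import structures.
From mathcomp Require Import all_boot all_order all_algebra.
From mathcomp Require Import classical_sets reals.
Set Implicit Arguments. Unset Strict Implicit. Unset Printing Implicit Defensive.
Import Order.TTheory GRing.Theory Num.Theory.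
Local Open Scope ring_scope.

Section Tensors.
Variable R : realType.

(* A third-order tensor a x b x n, stored by its n frontal slices
   (0-based: slice k is the paper's A_{k+1}). *)
Definition tensor (a b n : nat) := {ffun 'I_n -> 'M[R]_(a, b)}.

Definition ment a b (M : 'M[R]_(a, b)) (i j : nat) : R :=
  match insub i, insub j with
  | Some i', Some j' => M i' j'
  | _, _ => 0
  end.

Definition slice a b n (A : tensor a b n) (k : nat) : 'M[R]_(a, b) :=
  match insub k with Some k' => A k' | None => 0 end.

Definition unfold a b n (X : tensor a b n) : 'M[R]_(n * a, b) :=
  \matrix_(r < n * a, c < b) ment (slice X (r %/ a)) (r %% a) c.

Definition fold a b n (M : 'M[R]_(n * a, b)) : tensor a b n :=
  [ffun k : 'I_n => \matrix_(i < a, j < b) ment M (k * a + i) j].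

(* block-circulant matrix: (p,q) block is A_{((p-q) mod n)+1}, i.e. the
   0-based slice (p - q) mod n *)
Definition bcirc a b n (A : tensor a b n) : 'M[R]_(n * a, n * b) :=
  \matrix_(r < n * a, c < n * b)
    ment (slice A ((r %/ a + n - c %/ b) %% n)) (r %% a) (c %% b).

Definition tprod a b c n (A : tensor a b n) (X : tensor b c n) : tensor a c n :=
  fold (bcirc A *m unfold X).

(* transpose: transpose every slice and reverse the order of slices 2..n *)
Definition ttr a b n (A : tensor a b n) : tensor b a n :=
  [ffun k : 'I_n => (slice A ((n - k) %% n))^T].

Definition tid a n : tensor a a n :=
  [ffun k : 'I_n => if val k == 0%N then 1%:M else 0].

Definition tslice a b n (A : tensor a b n) (k : nat) : tensor a b n :=
  [ffun l : 'I_n => if val l == k then A l else 0].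

Definition fnorm a b n (A : tensor a b n) : R :=
  Num.sqrt (\sum_(k < n) \sum_(i < a) \sum_(j < b) (A k i j) ^+ 2).

Definition vnorm m (v : 'cV[R]_m) : R := Num.sqrt (\sum_(i < m) (v i 0) ^+ 2).
Definition mnorm2 p q (M : 'M[R]_(p, q)) : R :=
  sup [set vnorm (M *m v) | v in [set v : 'cV[R]_q | vnorm v <= 1]].

Definition opnorm a b n (C : tensor a b n) : R := mnorm2 (bcirc C).

Definition kappa a b n (A : tensor a b n) (alpha : R) : R :=
  \big[Num.max/0]_(i < n)
    opnorm (tid b n - alpha *: tprod (ttr (tslice A i)) (tslice A i)).

Definition mu a b n (A : tensor a b n) : R :=
  \big[Num.max/0]_(i < n) \big[Num.max/0]_(j < n | i != j)
    opnorm (tprod (ttr (tslice A i)) (tslice A j)).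

End Tensors.

From HB Require Import structures.
From mathcomp Require Import all_boot all_order all_algebra.
From mathcomp Require Import classical_sets reals.
From mathcomp Require Import ring zify.
Import Order.TTheory GRing.Theory Num.Theory.
Set Implicit Arguments. Unset Strict Implicit.
Local Open Scope ring_scope.

(* Write D(t) = X(t) - X*. Splitting the residual B - sum_j A~_(t-j) * X(t-j) with
   B = A * X* = sum_j A~_(t-j) * X*, one step of the method reads
     D(t+1) = (I - alpha A~_i^T * A~_i) * D(t) - alpha sum_(j>=1) (A~_i^T * A~_(i-j)) * D(t-j),
   with i = t mod n. Since the Frobenius norm of a t-product is bounded by the
   operator norm of its left factor, E(t+1) <= kappa E(t) + alpha mu sum_(1<=j<n) E(t-j),
   with E(t) = E(0) for t <= 0. The closed form of eps_t satisfies the same delayed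
   recursion with equality, and the comparison follows by strong induction on t. *)

Section SumOfSquares.
Variables (R : realType) (I : finType).
Implicit Types f g : I -> R.

Lemma sum_sqr_ge0 f : 0 <= \sum_i f i ^+ 2.
Proof. by apply: sumr_ge0 => i _; exact: sqr_ge0. Qed.

Lemma sum_mul_sqr_le f g :
  (\sum_i f i * g i) ^+ 2 <= (\sum_i f i ^+ 2) * (\sum_i g i ^+ 2).
Proof.
set A := \sum_i f i ^+ 2; set B := \sum_i g i ^+ 2; set C := \sum_i f i * g i.
have AB : A * B = \sum_i \sum_j f i ^+ 2 * g j ^+ 2.
  by rewrite mulr_suml; apply: eq_bigr => i _; rewrite mulr_sumr.
have BA : A * B = \sum_i \sum_j f j ^+ 2 * g i ^+ 2.
  by rewrite mulrC mulr_suml; apply: eq_bigr => i _; rewrite mulr_sumr;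
    apply: eq_bigr => j _; rewrite mulrC.
have CC : C ^+ 2 = \sum_i \sum_j f i * g i * (f j * g j).
  by rewrite expr2 mulr_suml; apply: eq_bigr => i _; rewrite mulr_sumr.
have lagrange : \sum_i \sum_j (f i * g j - f j * g i) ^+ 2 = (A * B - C ^+ 2) *+ 2.
  rewrite mulrnBl mulr2n {1}AB BA CC -sumrMnl -!big_split -sumrB /=.
  apply: eq_bigr => i _; rewrite -sumrMnl -!big_split -sumrB /=.
  by apply: eq_bigr => j _; ring.
rewrite -subr_ge0 -(pmulrn_lge0 _ (isT : 0 < 2)%N) -lagrange.
by apply: sumr_ge0 => i _; exact: sum_sqr_ge0.
Qed.

Lemma sqrt_sum_sqrD_le f g :
  Num.sqrt (\sum_i (f i + g i) ^+ 2)
    <= Num.sqrt (\sum_i f i ^+ 2) + Num.sqrt (\sum_i g i ^+ 2).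
Proof.
set A := \sum_i f i ^+ 2; set B := \sum_i g i ^+ 2; set C := \sum_i f i * g i.
have A0 : 0 <= A := sum_sqr_ge0 f; have B0 : 0 <= B := sum_sqr_ge0 g.
have le_C : C <= Num.sqrt A * Num.sqrt B.
  rewrite -sqrtrM // (le_trans (ler_norm C)) // -sqrtr_sqr ler_sqrt ?mulr_ge0 //.
  exact: sum_mul_sqr_le.
have expand : \sum_i (f i + g i) ^+ 2 = A + C *+ 2 + B.
  rewrite -!sumrMnl -!big_split /=; apply: eq_bigr => i _; ring.
rewrite -ler_sqr ?nnegrE ?addr_ge0 ?sqrtr_ge0 // sqr_sqrtr ?sum_sqr_ge0 //.
by rewrite expand sqrrD !sqr_sqrtr // lerD2r lerD2l lerMn2r le_C orbT.
Qed.

End SumOfSquares.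

Section OperatorNorm.
Variable R : realType.

Definition sqfrob p q (M : 'M[R]_(p, q)) : R := \sum_i \sum_j M i j ^+ 2.

Lemma sqfrob_ge0 p q (M : 'M[R]_(p, q)) : 0 <= sqfrob M.
Proof. by apply: sumr_ge0 => i _; exact: sum_sqr_ge0. Qed.

Lemma vnorm_ge0 m (v : 'cV[R]_m) : 0 <= vnorm v.
Proof. exact: sqrtr_ge0. Qed.

Lemma sqr_vnorm m (v : 'cV[R]_m) : vnorm v ^+ 2 = \sum_i v i 0 ^+ 2.
Proof. by rewrite sqr_sqrtr ?sum_sqr_ge0. Qed.

Lemma vnorm0 m : vnorm (0 : 'cV[R]_m) = 0.
Proof. by rewrite /vnorm big1 ?sqrtr0 // => i _; rewrite mxE expr0n. Qed.

Lemma vnormZ m (c : R) (v : 'cV[R]_m) : vnorm (c *: v) = `|c| * vnorm v.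
Proof.
rewrite /vnorm -sqrtr_sqr -sqrtrM ?sqr_ge0 // mulr_sumr.
by congr Num.sqrt; apply: eq_bigr => i _; rewrite mxE exprMn.
Qed.

Variables (p q : nat) (M : 'M[R]_(p, q)).

Lemma vnorm_mulmx_le_sqrt_sqfrob (v : 'cV[R]_q) :
  vnorm (M *m v) <= Num.sqrt (sqfrob M) * vnorm v.
Proof.
rewrite -ler_sqr ?nnegrE ?mulr_ge0 ?sqrtr_ge0 ?vnorm_ge0 //.
rewrite exprMn !sqr_vnorm sqr_sqrtr ?sqfrob_ge0 // mulr_suml; apply: ler_sum => i _.
rewrite mxE; exact: sum_mul_sqr_le (M i) (fun j => v j 0).
Qed.

Let unit_image := [set vnorm (M *m v) | v in [set v : 'cV[R]_q | vnorm v <= 1]]%classic.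

Lemma has_sup_unit_image : has_sup unit_image.
Proof.
split; first by exists (vnorm (M *m 0)), 0 => //=; rewrite vnorm0.
exists (Num.sqrt (sqfrob M)) => _ [v /= v_le1 <-].
apply: le_trans (vnorm_mulmx_le_sqrt_sqfrob v) _.
by rewrite ler_piMr ?sqrtr_ge0.
Qed.

Lemma mnorm2_ge0 : 0 <= mnorm2 M.
Proof.
have zero_le1 : vnorm (0 : 'cV[R]_q) <= 1 by rewrite vnorm0.
have := sup_upper_bound has_sup_unit_image (ex_intro2 _ _ 0 zero_le1 erefl).
by rewrite mulmx0 vnorm0.
Qed.

Lemma vnorm_mulmx_le (v : 'cV[R]_q) : vnorm (M *m v) <= mnorm2 M * vnorm v.
Proof.
have [v0|v_neq0] := eqVneq (vnorm v) 0.
  by have := vnorm_mulmx_le_sqrt_sqfrob v; rewrite v0 !mulr0.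
have v_gt0 : 0 < vnorm v by rewrite lt_def v_neq0 vnorm_ge0.
set u := (vnorm v)^-1 *: v.
have u_le1 : vnorm u <= 1.
  by rewrite vnormZ ger0_norm ?invr_ge0 ?vnorm_ge0 // mulVf.
have := sup_upper_bound has_sup_unit_image (ex_intro2 _ _ u u_le1 erefl).
by rewrite -scalemxAr vnormZ ger0_norm ?invr_ge0 ?vnorm_ge0 // ler_pdivrMl // mulrC.
Qed.

Lemma sqfrob_mulmx_le r (U : 'M[R]_(q, r)) :
  sqfrob (M *m U) <= mnorm2 M ^+ 2 * sqfrob U.
Proof.
rewrite /sqfrob exchange_big [X in _ <= _ * X]exchange_big mulr_sumr.
apply: ler_sum => j _.
have col_sq (V : 'M[R]_(_, r)) : \sum_i V i j ^+ 2 = vnorm (col j V) ^+ 2.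
  by rewrite sqr_vnorm; apply: eq_bigr => i _; rewrite mxE.
rewrite !col_sq -exprMn !colE -mulmxA -colE.
by rewrite ler_sqr ?nnegrE ?mulr_ge0 ?mnorm2_ge0 ?vnorm_ge0 // vnorm_mulmx_le.
Qed.

End OperatorNorm.

Section Tensors.
Variable R : realType.

Lemma stack_index_subproof n a (k : 'I_n) (i : 'I_a) : (k * a + i < n * a)%N.
Proof. case: k i => [k lt_kn] [i lt_ia] /=; nia. Qed.

Definition stack_index n a (k : 'I_n) (i : 'I_a) : 'I_(n * a) :=
  Ordinal (stack_index_subproof k i).

Lemma stack_index_div n a (k : 'I_n) (i : 'I_a) : (stack_index k i %/ a)%N = k.
Proof. by rewrite /= divnMDl ?divn_small ?addn0 // (leq_ltn_trans _ (ltn_ord i)). Qed.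

Lemma stack_index_mod n a (k : 'I_n) (i : 'I_a) : (stack_index k i %% a)%N = i.
Proof. by rewrite /= modnMDl modn_small. Qed.

Lemma sum_stack_index n a (F : 'I_(n * a) -> R) :
  \sum_r F r = \sum_(k < n) \sum_(i < a) F (stack_index k i).
Proof.
pose G r := if insub r is Some r' then F r' else 0.
have GE r : G (val r) = F r by rewrite /G valK.
rewrite (eq_bigr (G \o val)) => [|r _]; last by rewrite /= GE.
rewrite -(big_mkord xpredT G) big_nat_mul big_mkord; apply: eq_bigr => k _.
rewrite -{1}[(k * a)%N]add0n big_addn mulSn addnK big_mkord.
by apply: eq_bigr => i _; rewrite addnC -GE.
Qed.

Lemma sliceE a b n (X : tensor R a b n) (k : 'I_n) : slice X k = X k.
Proof. by rewrite /slice valK. Qed.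

Lemma mentE p q (M : 'M[R]_(p, q)) (i : 'I_p) (j : 'I_q) : ment M i j = M i j.
Proof. by rewrite /ment !valK. Qed.

Lemma unfoldE a b n (X : tensor R a b n) k i j : unfold X (stack_index k i) j = X k i j.
Proof. by rewrite mxE stack_index_div stack_index_mod sliceE mentE. Qed.

Lemma foldE a b n (M : 'M[R]_(n * a, b)) k i j : fold M k i j = M (stack_index k i) j.
Proof. by rewrite ffunE mxE -[(k * a + i)%N]/(val (stack_index k i)) mentE. Qed.

Lemma fnorm_fold a b n (M : 'M[R]_(n * a, b)) : fnorm (fold M) = Num.sqrt (sqfrob M).
Proof.
rewrite /fnorm /sqfrob sum_stack_index; congr Num.sqrt.
by do 3!(apply: eq_bigr => ? _); rewrite foldE.
Qed.

Lemma fnorm_unfold a b n (X : tensor R a b n) : fnorm X = Num.sqrt (sqfrob (unfold X)).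
Proof.
rewrite /fnorm /sqfrob sum_stack_index; congr Num.sqrt.
by do 3!(apply: eq_bigr => ? _); rewrite unfoldE.
Qed.

Lemma fnorm_ge0 a b n (X : tensor R a b n) : 0 <= fnorm X.
Proof. exact: sqrtr_ge0. Qed.

Lemma fnorm_tprod_le a b c n (C : tensor R a b n) (Y : tensor R b c n) :
  fnorm (tprod C Y) <= opnorm C * fnorm Y.
Proof.
have C0 := mnorm2_ge0 (bcirc C).
rewrite fnorm_fold fnorm_unfold /opnorm -[mnorm2 _]ger0_norm //.
rewrite -sqrtr_sqr -sqrtrM ?sqr_ge0 // ler_sqrt ?mulr_ge0 ?sqr_ge0 ?sqfrob_ge0 //.
exact: sqfrob_mulmx_le.
Qed.

Lemma fnorm_flat a b n (X : tensor R a b n) :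
  fnorm X = Num.sqrt (\sum_(u : 'I_n * ('I_a * 'I_b)) X u.1 u.2.1 u.2.2 ^+ 2).
Proof. by rewrite /fnorm; under eq_bigr do rewrite pair_big; rewrite pair_big. Qed.

Lemma fnormD_le a b n (X Y : tensor R a b n) : fnorm (X + Y) <= fnorm X + fnorm Y.
Proof.
rewrite !fnorm_flat; under eq_bigr do rewrite ffunE mxE.
exact: sqrt_sum_sqrD_le (fun u => X u.1 u.2.1 u.2.2) (fun u => Y u.1 u.2.1 u.2.2).
Qed.

Lemma fnormZ a b n (s : R) (X : tensor R a b n) : fnorm (s *: X) = `|s| * fnorm X.
Proof.
rewrite !fnorm_flat -sqrtr_sqr -sqrtrM ?sqr_ge0 // mulr_sumr; congr Num.sqrt.
by apply: eq_bigr => u _; rewrite ffunE mxE exprMn.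
Qed.

Lemma fnormN a b n (X : tensor R a b n) : fnorm (- X) = fnorm X.
Proof. by rewrite -scaleN1r fnormZ normrN1 mul1r. Qed.

Lemma fnorm_sum_le a b n (I : finType) (X : I -> tensor R a b n) :
  fnorm (\sum_i X i) <= \sum_i fnorm (X i).
Proof.
elim/big_rec2: _ => [|i Y r _ le_Y].
  by rewrite -(scale0r (0 : tensor R a b n)) fnormZ normr0 mul0r.
by apply: le_trans (fnormD_le _ _) _; rewrite lerD2l.
Qed.

End Tensors.

Section TProduct.
Variables (R : realType) (m : nat).
Local Notation N := m.+1.

Lemma val_subZp (k l : 'I_N) : val (k - l) = ((k + N - l) %% N)%N.
Proof. by rewrite /= modnDmr addnBA // ltnW. Qed.

Lemma val_inZp_sub t (j : 'I_N) : val (inZp t - j : 'I_N) = ((t + N - j) %% N)%N.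
Proof. by rewrite val_subZp /= -!addnBA ?(ltnW (ltn_ord j)) // modnDml. Qed.

Lemma tprodE a b c (C : tensor R a b N) (Y : tensor R b c N) :
  tprod C Y = [ffun k => \sum_l C (k - l) *m Y l].
Proof.
apply/ffunP => k; apply/matrixP => i j.
rewrite foldE ffunE summxE mxE sum_stack_index; apply: eq_bigr => l _.
rewrite mxE; apply: eq_bigr => p _.
by rewrite unfoldE mxE !stack_index_div !stack_index_mod -val_subZp sliceE mentE.
Qed.

Lemma tprodBr a b c (C : tensor R a b N) (Y Z : tensor R b c N) :
  tprod C (Y - Z) = tprod C Y - tprod C Z.
Proof.
rewrite !tprodE; apply/ffunP => k; rewrite !ffunE -sumrB.
by apply: eq_bigr => l _; rewrite !ffunE mulmxBr.
Qed.

Lemma tprod0r a b c (C : tensor R a b N) : tprod C (0 : tensor R b c N) = 0.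
Proof. by rewrite -(subrr 0) tprodBr subrr. Qed.

Lemma tprodNr a b c (C : tensor R a b N) (Y : tensor R b c N) :
  tprod C (- Y) = - tprod C Y.
Proof. by rewrite -sub0r tprodBr tprod0r sub0r. Qed.

Lemma tprod_sumr a b c (I : finType) (C : tensor R a b N) (Y : I -> tensor R b c N) :
  tprod C (\sum_i Y i) = \sum_i tprod C (Y i).
Proof.
rewrite tprodE; apply/ffunP => k; rewrite !ffunE sum_ffunE.
under eq_bigr do rewrite sum_ffunE mulmx_sumr.
rewrite exchange_big; apply: eq_bigr => i _.
by rewrite tprodE ffunE.
Qed.

Lemma tprodBl a b c (C D : tensor R a b N) (Y : tensor R b c N) :
  tprod (C - D) Y = tprod C Y - tprod D Y.
Proof.
rewrite !tprodE; apply/ffunP => k; rewrite !ffunE -sumrB.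
by apply: eq_bigr => l _; rewrite !ffunE mulmxBl.
Qed.

Lemma tprodZl a b c (s : R) (C : tensor R a b N) (Y : tensor R b c N) :
  tprod (s *: C) Y = s *: tprod C Y.
Proof.
rewrite !tprodE; apply/ffunP => k; rewrite !ffunE scaler_sumr.
by apply: eq_bigr => l _; rewrite !ffunE scalemxAl.
Qed.

Lemma tprod_suml a b c (I : finType) (C : I -> tensor R a b N) (Y : tensor R b c N) :
  tprod (\sum_i C i) Y = \sum_i tprod (C i) Y.
Proof.
rewrite tprodE; apply/ffunP => k; rewrite !ffunE sum_ffunE.
under eq_bigr do rewrite sum_ffunE mulmx_suml.
rewrite exchange_big; apply: eq_bigr => i _.
by rewrite tprodE ffunE.
Qed.

Lemma tprodA a b c d (C : tensor R a b N) (D : tensor R b c N) (Y : tensor R c d N) :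
  tprod C (tprod D Y) = tprod (tprod C D) Y.
Proof.
rewrite !tprodE; apply/ffunP => k; rewrite !ffunE.
under eq_bigr do rewrite ffunE mulmx_sumr.
under [RHS]eq_bigr do rewrite ffunE mulmx_suml.
rewrite exchange_big /=; apply: eq_bigr => l _.
rewrite (reindex_inj (addIr l)) /=; apply: eq_bigr => l' _.
by rewrite mulmxA addrK opprD addrA [k - l' - l]addrAC.
Qed.

Lemma tid_tprod b c (Y : tensor R b c N) : tprod (tid R b N) Y = Y.
Proof.
rewrite tprodE; apply/ffunP => k; rewrite ffunE (bigD1 k) //= big1 => [|l l_neq_k]; rewrite ffunE.
  by rewrite subrr mul1mx addr0.
have /negPf -> : \val (k - l) != 0%N by rewrite -[0%N]/(val (0 : 'I_N)) val_eqE subr_eq0 eq_sym.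
by rewrite mul0mx.
Qed.

Lemma sum_tslice a b (C : tensor R a b N) : \sum_(k : 'I_N) tslice C k = C.
Proof.
apply/ffunP => l; rewrite sum_ffunE (bigD1 l) //= ffunE eqxx big1 ?addr0 // => k k_neq_l.
by rewrite ffunE; case: eqP => // /val_inj lk; rewrite lk eqxx in k_neq_l.
Qed.

End TProduct.

Section KappaMu.
Variables (R : realType) (a b n : nat) (A : tensor R a b n).

Lemma kappa_ge0 alpha : 0 <= kappa A alpha.
Proof. exact: bigmax_ge_id. Qed.

Lemma mu_ge0 : 0 <= mu A.
Proof. exact: bigmax_ge_id. Qed.

Lemma opnorm_le_kappa alpha (i : 'I_n) :
  opnorm (tid R b n - alpha *: tprod (ttr (tslice A i)) (tslice A i)) <= kappa A alpha.
Proof. exact: le_bigmax. Qed.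

Lemma opnorm_le_mu (i j : 'I_n) :
  i != j -> opnorm (tprod (ttr (tslice A i)) (tslice A j)) <= mu A.
Proof.
move=> i_neq_j; apply: le_trans (le_bigmax _ _ i).
exact: le_bigmax_cond.
Qed.

End KappaMu.

Section DelayedRecursion.
Variables (R : realType) (k c : R) (n : nat) (e : int -> R).
Hypothesis e_le0 : forall t : int, t <= 0 -> e t = 1.

Lemma delayed_rec_of_closed_form :
  (forall t : nat, (1 <= t)%N ->
     e t%:Z = k ^+ t + c * \sum_(0 <= j < t)
                              (k ^+ j * \sum_(1 <= i < n) e (t%:Z - 1 - j%:Z - i%:Z))) ->
  forall t : nat, e t.+1%:Z = k * e t%:Z + c * \sum_(1 <= i < n) e (t%:Z - i%:Z).
Proof.
move=> e_closed t; set s := fun u : int => \sum_(1 <= i < n) e (u - i%:Z).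
have closed_form u : e u%:Z = k ^+ u + c * \sum_(0 <= j < u) (k ^+ j * s (u%:Z - 1 - j%:Z)).
  case: u => [|u]; first by rewrite e_le0 // big_geq // mulr0 addr0.
  by rewrite e_closed.
rewrite !closed_form big_nat_recl // expr0 mul1r exprS.
under eq_bigr do rewrite exprS -mulrA.
rewrite -mulr_sumr.
have -> : s (t.+1%:Z - 1 - 0%:Z) = s t%:Z by congr s; lia.
have -> : \sum_(0 <= j < t) (k ^+ j * s (t.+1%:Z - 1 - j.+1%:Z))
        = \sum_(0 <= j < t) (k ^+ j * s (t%:Z - 1 - j%:Z)).
  by apply: eq_bigr => j _; congr (_ * s _); lia.
by rewrite /s; ring.
Qed.

(* For [i > t] the truncated index [(t - i)%N] is 0: [E 0] stands in for the error at
   negative times, just as [e] is 1 there. *)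
Lemma delayed_recursion_le (E : nat -> R) : 0 <= k -> 0 <= c ->
  (forall t : nat, e t.+1%:Z = k * e t%:Z + c * \sum_(1 <= i < n) e (t%:Z - i%:Z)) ->
  (forall t : nat, E t.+1 <= k * E t + c * \sum_(1 <= i < n) E (t - i)%N) ->
  forall t : nat, E t <= e t%:Z * E 0%N.
Proof.
move=> k_ge0 c_ge0 e_rec E_rec; elim/ltn_ind => -[|t] IH.
  by rewrite e_le0 ?mul1r.
apply: le_trans (E_rec t) _; rewrite e_rec mulrDl -!mulrA mulr_suml.
apply: lerD; first by rewrite ler_wpM2l ?IH.
apply: ler_wpM2l => //; apply: ler_sum_nat => i /andP[i_ge1 _].
have [i_le_t|t_lt_i] := leqP i t.
  by rewrite subzn // IH // ltnS leq_subr.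
have /eqP -> : (t - i == 0)%N by rewrite subn_eq0 ltnW.
by rewrite e_le0 ?mul1r //; lia.
Qed.

End DelayedRecursion.

Section FrontalSliceDescent.
Variables (R : realType) (m n1 n2 n3 : nat).
Local Notation N := m.+1.
Variables (A : tensor R n1 n2 N) (B : tensor R n1 n3 N) (Xstar : tensor R n2 n3 N).
Variables (alpha : R) (X : nat -> tensor R n2 n3 N).
Hypothesis Hsol : tprod A Xstar = B.
Hypothesis HX0 : X 0%N = 0.
Hypothesis HXrec : forall t : nat,
  X t.+1 = X t + alpha *: tprod (ttr (tslice A (t %% N)))
    (B - \sum_(j < N) (if (j <= t)%N
                       then tprod (tslice A ((t + N - j) %% N)) (X (t - j)%N)
                       else 0)).

Local Notation tA i := (tslice A (val i)).
Local Notation slot t := (inZp t : 'I_N).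

Lemma descent_step t :
  X t.+1 = X t + alpha *: tprod (ttr (tA (slot t)))
                   (B - \sum_(j : 'I_N) tprod (tA (slot t - j)) (X (t - j)%N)).
Proof.
rewrite HXrec; congr (_ + _ *: tprod _ (_ - _)); apply: eq_bigr => j _.
case: leqP => [_|t_lt_j]; first by rewrite val_inZp_sub.
by rewrite (eqP (_ : t - j == 0)%N) ?HX0 ?tprod0r // subn_eq0 ltnW.
Qed.

Lemma descent_error t :
  X t.+1 - Xstar =
    tprod (tid R n2 N - alpha *: tprod (ttr (tA (slot t))) (tA (slot t))) (X t - Xstar)
    - alpha *: \sum_(j < m) tprod (tprod (ttr (tA (slot t))) (tA (slot t - lift ord0 j)))
                                   (X (t - j.+1)%N - Xstar).
Proof.
set i := slot t.
have B_split : B = \sum_(j : 'I_N) tprod (tA (i - j)) Xstar.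
  by rewrite -Hsol -{1}(sum_tslice A) tprod_suml (reindex_inj (subrI i)).
have residual : B - \sum_(j : 'I_N) tprod (tA (i - j)) (X (t - j)%N)
              = - \sum_(j : 'I_N) tprod (tA (i - j)) (X (t - j)%N - Xstar).
  by rewrite B_split -sumrB -sumrN; apply: eq_bigr => j _; rewrite tprodBr opprB.
rewrite descent_step residual tprodNr tprod_sumr big_ord_recl (subr0 i) subn0.
rewrite tprodBl tprodZl tid_tprod tprodA; under eq_bigr do rewrite tprodA.
rewrite scalerN scalerDr opprD !addrA [LHS]addrAC.
by rewrite [X t - _ - Xstar]addrAC.
Qed.

Hypothesis alpha_ge0 : 0 <= alpha.

Lemma descent_error_le t :
  fnorm (X t.+1 - Xstar) <= kappa A alpha * fnorm (X t - Xstar)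
    + alpha * mu A * \sum_(1 <= i < N) fnorm (X (t - i)%N - Xstar).
Proof.
rewrite descent_error.
apply: le_trans (fnormD_le _ _) _; rewrite fnormN fnormZ ger0_norm //.
apply: lerD.
  apply: le_trans (fnorm_tprod_le _ _) _.
  by rewrite ler_wpM2r ?fnorm_ge0 ?opnorm_le_kappa.
rewrite -mulrA ler_wpM2l // big_add1 big_mkord mulr_sumr.
apply: le_trans (fnorm_sum_le _) _; apply: ler_sum => j _.
apply: le_trans (fnorm_tprod_le _ _) _.
rewrite ler_wpM2r ?fnorm_ge0 // opnorm_le_mu // -subr_eq0 opprB addrC subrK.
by apply/eqP => /(congr1 val).
Qed.

End FrontalSliceDescent.

Theorem lemma2 (R : realType) (n1 n2 n3 n : nat) (Hn : (0 < n)%N)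
  (A : tensor R n1 n2 n) (B : tensor R n1 n3 n) (Xstar : tensor R n2 n3 n)
  (alpha : R) (Halpha : 0 < alpha)
  (Hsol : tprod A Xstar = B)
  (Huniq : forall Y : tensor R n2 n3 n, tprod A Y = B -> Y = Xstar)
  (X : nat -> tensor R n2 n3 n)
  (HX0 : X 0%N = 0)
  (HXrec : forall t : nat,
     X t.+1 = X t + alpha *: tprod (ttr (tslice A (t %% n)))
        (B - \sum_(j < n) (if (j <= t)%N
                           then tprod (tslice A ((t + n - j) %% n)) (X (t - j)%N)
                           else 0)))
  (eps : int -> R)
  (Heps0 : forall t : int, t <= 0 -> eps t = 1)
  (Heps : forall t : nat, (1 <= t)%N ->
     eps t%:Z = kappa A alpha ^+ t
       + alpha * mu A * \sum_(0 <= j < t) (kappa A alpha ^+ j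
            * \sum_(1 <= i < n) eps (t%:Z - 1 - j%:Z - i%:Z))) :
  forall t : nat, (1 <= t)%N ->
    fnorm (X t - Xstar) <= eps t%:Z * fnorm (X 0%N - Xstar).
Proof.
case: n Hn A B Xstar Hsol Huniq X HX0 HXrec Heps => [//|m] _ A B Xstar Hsol _ X HX0 HXrec Heps t _.
have alpha_ge0 := ltW Halpha.
apply: (delayed_recursion_le (E := fun s => fnorm (X s - Xstar)) Heps0 (kappa_ge0 A alpha)
          (mulr_ge0 alpha_ge0 (mu_ge0 A)) (delayed_rec_of_closed_form Heps0 Heps)) => s.
exact: (descent_error_le Hsol HX0 HXrec alpha_ge0 s).
Qed.
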